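(* Let $\nu$ be a fixed order, let $a<b$, and let $f,g\in C^{\infty}[a,b]$ with $g(x)\neq 0$ and $g'(x)\neq 0$ for all $x\in[a,b]$. For $\omega>0$ set $\mathcal{H}_{\nu}[f]=\int_a^b f(x)J_{\nu}(\omega g(x))\,dx$. Define $\sigma_0[f](x)=f(x)$ and, for $k\ge 1$, $$\sigma_k[f](x)=g(x)^{\nu+k}\frac{d}{dx}\left[\frac{\sigma_{k-1}[f](x)}{g(x)^{\nu+k}g'(x)}\right].$$ Then, as $\omega\to\infty$, $$\mathcal{H}_{\nu}[f]\sim-\sum_{k=1}^{\infty}\frac{1}{(-\omega)^k}\left\{\frac{\sigma_{k-1}[f](b)}{g'(b)}J_{\nu+k}(\omega g(b))-\frac{\sigma_{k-1}[f](a)}{g'(a)}J_{\nu+k}(\omega g(a))\right\}.$$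
   Context: $J_\nu$ denotes the Bessel function of the first kind of order $\nu$. The symbol $\sim$ denotes an asymptotic expansion as $\omega\to\infty$. *)

From Stdlib Require Import Reals Factorial.
From Coquelicot Require Import Coquelicot.
Open Scope R_scope.

Fixpoint rising (s : R) (n : nat) : R :=
  match n with
  | O => s
  | S n' => rising s n' * (s + INR n)
  end.

(* Reciprocal Gamma function 1/Gamma(s), entire, via Gauss' product formula
   Gamma(s) = lim n! n^s / (s (s+1) ... (s+n)); it vanishes at s = 0,-1,-2,... *)
Definition rgamma (s : R) : R :=
  real (Lim_seq (fun n => rising s n / (INR (fact n) * Rpower (INR n) s))).

Definition BesselJ_pos (nu x : R) : R :=
  Rpower (x / 2) nu *
  Series (fun m : nat => (-1) ^ m * rgamma (INR m + nu + 1) / INR (fact m)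
                          * (x / 2) ^ (2 * m)).

(* J_nu(x) on the real line, complex valued, principal branch
   (arg x = pi for x < 0): J_nu(x) = e^{i pi nu} J_nu(|x|) for x < 0.
   The value at x = 0 is irrelevant for the theorem (g never vanishes). *)
Definition BesselJ (nu x : R) : C :=
  if Rlt_dec 0 x then RtoC (BesselJ_pos nu x)
  else if Rlt_dec x 0 then Cmult (cos (PI * nu), sin (PI * nu)) (RtoC (BesselJ_pos nu (- x)))
  else if Req_EM_T nu 0 then RtoC 1 else RtoC 0.

Definition smooth_on (f : R -> R) (a b : R) : Prop :=
  exists c d, c < a /\ b < d /\ forall (n : nat) (x : R), c < x < d -> ex_derive_n f n x.

Definition Hnu (nu : R) (f g : R -> R) (a b omega : R) : C :=
  @RInt C_R_CompleteNormedModule (fun x => scal (f x) (BesselJ nu (omega * g x))) a b.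

(* The power g^(nu+k) is the principal one, e^{i pi (nu+k)} |g|^(nu+k) when g < 0;
   the constant phase cancels, so |g|^(nu+k) is used. *)
Fixpoint sigma (nu : R) (f g : R -> R) (k : nat) : R -> R :=
  match k with
  | O => f
  | S k' => fun x =>
      Rpower (Rabs (g x)) (nu + INR k) *
      Derive (fun y => sigma nu f g k' y / (Rpower (Rabs (g y)) (nu + INR k) * Derive g y)) x
  end.

Definition asym_term (nu : R) (f g : R -> R) (a b omega : R) (k : nat) : C :=
  scal (/ (- omega) ^ k)
    (minus (scal (sigma nu f g (k - 1) b / Derive g b) (BesselJ (nu + INR k) (omega * g b)))
           (scal (sigma nu f g (k - 1) a / Derive g a) (BesselJ (nu + INR k) (omega * g a)))).

(* Near [a, b] write g = s |g| with s = 1 or s = -1; on the principal branch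
   J_nu(omega g) is then a constant unimodular phase times the real function
   J_nu(omega |g|), so it suffices to expand the real integral of f J_nu(omega |g|).
   The recurrence J_mu' = J_(mu-1) - (mu/x) J_mu gives
   (|g|^mu J_mu(omega |g|))' = omega s g' |g|^mu J_(mu-1)(omega |g|), so integrating
   sigma_(k-1) J_(nu+k-1)(omega |g|) by parts against sigma_(k-1) / (|g|^(nu+k) g')
   produces the k-th boundary term and -1/(omega s) times the integral of
   sigma_k J_(nu+k)(omega |g|).  After N + 1 steps the remainder is omega^(-N-1) times
   an integral of a smooth function against J_(nu+N+1)(omega |g|), and
   J_mu(x) = O(x^(-1/2)) gives the bound omega^(-N-3/2).  The decay of J_mu comes from
   the energy E(y) = y (J_mu^2 + J_(mu+1)^2) - (1 + 2 mu) J_mu J_(mu+1), whose derivative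
   (1 + 2 mu) J_mu J_(mu+1) / y is small enough that E(y) exp(|1 + 2 mu| / y) decreases.
   The recurrences are proved termwise on the power series of J_mu, using
   1/Gamma(s) = s / Gamma(s + 1) for Gauss's product formula. *)

From Stdlib Require Import Reals Lra Lia Factorial.
From Coquelicot Require Import Coquelicot.
Open Scope R_scope.

Definition rgamma_seq (s : R) (n : nat) : R :=
  rising s n / (INR (fact n) * Rpower (INR n) s).

Lemma rising_shift (s : R) (n : nat) : s * rising (s + 1) n = rising s (S n).
Proof.
  induction n as [|n IH]; [simpl; ring|].
  change (s * (rising (s + 1) n * (s + 1 + INR (S n))) =
          rising s (S n) * (s + INR (S (S n)))).
  rewrite <- Rmult_assoc, IH, (S_INR (S n)). ring.
Qed.

Lemma ln_1_plus_sub_le (u : R) : Rabs u <= / 2 -> Rabs (ln (1 + u) - u) <= 2 * u ^ 2.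
Proof.
  intros Hu. apply Rabs_le_between in Hu.
  assert (Up : ln (1 + u) <= u).
  { rewrite <- (ln_exp u) at 2. apply ln_le; [lra|apply exp_ineq1_le]. }
  assert (Low : u / (1 + u) <= ln (1 + u)).
  { assert (E : / (1 + u) <= exp (- (u / (1 + u)))).
    { replace (/ (1 + u)) with (1 + - (u / (1 + u))) by (field; lra).
      apply exp_ineq1_le. }
    apply ln_le in E; [|apply Rinv_0_lt_compat; lra].
    rewrite ln_exp, ln_Rinv in E by lra. lra. }
  assert (u - 2 * u ^ 2 <= u / (1 + u)).
  { apply Rmult_le_reg_r with (1 + u); [lra|].
    unfold Rdiv. rewrite Rmult_assoc, Rinv_l by lra. nra. }
  apply Rabs_le. nra.
Qed.

Lemma is_series_inv_consecutive :
  is_series (fun k => / (INR (S k) * INR (S (S k)))) 1.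
Proof.
  change (is_lim_seq (sum_n (fun k => / (INR (S k) * INR (S (S k))))) 1).
  apply (is_lim_seq_ext (fun n => 1 - / INR (S (S n)))).
  - induction n as [|n IH].
    + rewrite sum_O. simpl. field.
    + rewrite sum_Sn, <- IH, (S_INR (S (S n))), (S_INR (S n)).
      assert (Px : 0 < INR (S n)) by (apply lt_0_INR; lia).
      revert Px. generalize (INR (S n)). intros x Px. unfold plus; simpl. field. lra.
  - eapply is_lim_seq_minus; [apply is_lim_seq_const| |].
    + apply (is_lim_seq_ext (fun n => / INR (n + 2))); [intros n; do 3 f_equal; lia|].
      apply (is_lim_seq_incr_n (fun n => / INR n) 2).
      replace (Finite 0) with (Rbar_inv p_infty) by reflexivity.
      apply is_lim_seq_inv; [apply is_lim_seq_INR|discriminate].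
    + unfold is_Rbar_minus, is_Rbar_plus; simpl. rewrite Ropp_0, Rplus_0_r. reflexivity.
Qed.

Lemma ex_finite_lim_seq_exp_series (u e : nat -> R) (n0 : nat) :
  (forall k, u (S (n0 + k)) = u (n0 + k)%nat * exp (e k)) -> ex_series e ->
  ex_finite_lim_seq u.
Proof.
  intros Hu [L HL].
  assert (Hprod : forall k, u (S (n0 + k)) = u n0 * exp (sum_n e k)).
  { induction k as [|k IH].
    - rewrite sum_O, Hu, Nat.add_0_r. reflexivity.
    - rewrite sum_Sn, (Hu (S k)), Nat.add_succ_r, IH. unfold plus; simpl.
      rewrite exp_plus. ring. }
  exists (u n0 * exp L).
  apply (is_lim_seq_incr_n _ (S n0)).
  apply (is_lim_seq_ext (fun k => u n0 * exp (sum_n e k))).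
  - intros k. rewrite <- Hprod. f_equal. lia.
  - apply (is_lim_seq_scal_l _ (u n0) (exp L)).
    apply (is_lim_seq_continuous exp (sum_n e) L); [|exact HL].
    apply derivable_continuous_pt, derivable_pt_exp.
Qed.

Definition rgamma_ratio (s m : R) : R := (1 + s / m) * exp (s * ln (1 - / m)).

Lemma rgamma_seq_S (s : R) (n : nat) : (1 <= n)%nat ->
  rgamma_seq s (S n) = rgamma_seq s n * rgamma_ratio s (INR (S n)).
Proof.
  intros Hn. unfold rgamma_seq, rgamma_ratio, Rpower.
  change (rising s (S n)) with (rising s n * (s + INR (S n))).
  rewrite fact_simpl, mult_INR.
  assert (Pn : 0 < INR n) by (apply lt_0_INR; lia).
  assert (PSn : 0 < INR (S n)) by (apply lt_0_INR; lia).
  replace (1 - / INR (S n)) with (INR n / INR (S n)) by (rewrite S_INR; field; lra).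
  rewrite ln_div by lra.
  replace (exp (s * (ln (INR n) - ln (INR (S n)))))
    with (exp (s * ln (INR n)) / exp (s * ln (INR (S n)))).
  2:{ unfold Rdiv. rewrite <- exp_Ropp, <- exp_plus. f_equal. ring. }
  pose proof (exp_pos (s * ln (INR (S n)))). pose proof (exp_pos (s * ln (INR n))).
  assert (0 < INR (fact n)) by apply (lt_0_INR _ (lt_O_fact n)).
  field. repeat split; lra.
Qed.

Lemma rgamma_ratio_ln_bound (s m : R) : 2 * Rabs s + 2 <= m ->
  0 < rgamma_ratio s m /\
  Rabs (ln (rgamma_ratio s m)) <= (2 * s ^ 2 + 2 * Rabs s) / (m * m).
Proof.
  intros Hm. pose proof (Rabs_pos s) as Hs0.
  assert (Hsm : Rabs (s / m) <= / 2).
  { unfold Rdiv. rewrite Rabs_mult, Rabs_inv, (Rabs_pos_eq m) by lra.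
    apply Rmult_le_reg_r with m; [lra|]. rewrite Rmult_assoc, Rinv_l by lra. lra. }
  assert (Hvm : Rabs (- / m) <= / 2).
  { rewrite Rabs_Ropp, Rabs_inv, Rabs_pos_eq by lra. apply Rinv_le_contravar; lra. }
  assert (Hsm' := Hsm). apply Rabs_le_between in Hsm'.
  unfold rgamma_ratio. split; [apply Rmult_lt_0_compat; [lra|apply exp_pos]|].
  rewrite ln_mult, ln_exp by (try apply exp_pos; lra).
  replace (ln (1 + s / m) + s * ln (1 - / m))
    with ((ln (1 + s / m) - s / m) + s * (ln (1 + - / m) - - / m)) by (unfold Rminus; field; lra).
  eapply Rle_trans; [apply Rabs_triang|]. rewrite Rabs_mult.
  apply Rle_trans with (2 * (s / m) ^ 2 + Rabs s * (2 * (- / m) ^ 2)).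
  - apply Rplus_le_compat; [now apply ln_1_plus_sub_le|].
    apply Rmult_le_compat_l; [lra|now apply ln_1_plus_sub_le].
  - right. field. lra.
Qed.

Lemma rgamma_seq_cvg (s : R) : ex_finite_lim_seq (rgamma_seq s).
Proof.
  destruct (INR_unbounded (2 * Rabs s + 2)) as [n0 Hn0].
  pose proof (Rabs_pos s).
  assert (Hn0' : (1 <= n0)%nat) by (destruct n0; [simpl in Hn0; lra|lia]).
  set (C := 2 * s ^ 2 + 2 * Rabs s).
  assert (Hr : forall k, 0 < rgamma_ratio s (INR (S (n0 + k))) /\
    Rabs (ln (rgamma_ratio s (INR (S (n0 + k))))) <= C * / (INR (S k) * INR (S (S k)))).
  { intros k.
    assert (Hm : INR n0 + 1 <= INR (S (n0 + k)))
      by (rewrite S_INR, plus_INR; pose proof (pos_INR k); lra).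
    destruct (rgamma_ratio_ln_bound s (INR (S (n0 + k)))) as [Hpos Hln]; [lra|].
    split; [exact Hpos|]. eapply Rle_trans; [exact Hln|].
    apply Rmult_le_compat_l; [unfold C; nra|].
    apply Rinv_le_contravar; [apply Rmult_lt_0_compat; apply lt_0_INR; lia|].
    rewrite !S_INR, plus_INR. pose proof (pos_INR k). pose proof (pos_INR n0).
    assert (1 <= INR n0) by (apply (le_INR 1); lia). nra. }
  apply (ex_finite_lim_seq_exp_series _ (fun k => ln (rgamma_ratio s (INR (S (n0 + k))))) n0).
  - intros k. rewrite exp_ln by apply Hr. apply rgamma_seq_S. lia.
  - apply (ex_series_le (K := R_AbsRing) (V := R_CompleteNormedModule) _
      (fun k => C * / (INR (S k) * INR (S (S k))))); [apply Hr|].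
    exists (C * 1). apply (is_series_scal_l C _ 1 is_series_inv_consecutive).
Qed.

Lemma rgamma_succ (s : R) : rgamma s = s * rgamma (s + 1).
Proof.
  destruct (rgamma_seq_cvg s) as [l Hl], (rgamma_seq_cvg (s + 1)) as [l' Hl'].
  unfold rgamma. fold (rgamma_seq s) (rgamma_seq (s + 1)).
  rewrite (is_lim_seq_unique _ _ Hl), (is_lim_seq_unique _ _ Hl'). simpl.
  set (c := fun n : nat => exp ((s + 1) * ln (1 + / INR n))).
  assert (Hc : is_lim_seq c 1).
  { replace (Finite 1) with (Finite (exp ((s + 1) * ln (1 + 0))))
      by (rewrite Rplus_0_r, ln_1, Rmult_0_r, exp_0; reflexivity).
    apply (is_lim_seq_continuous (fun x => exp ((s + 1) * ln (1 + x)))).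
    - apply continuity_pt_filterlim, (ex_derive_continuous (fun x => exp ((s + 1) * ln (1 + x)))).
      auto_derive. lra.
    - replace (Finite 0) with (Rbar_inv p_infty) by reflexivity.
      apply is_lim_seq_inv; [apply is_lim_seq_INR|discriminate]. }
  (* rgamma_seq s (n+1) * c n = s * rgamma_seq (s+1) n, with limits l and s l'. *)
  assert (H1 : is_lim_seq (fun n => rgamma_seq s (S n) * c n) (l * 1)).
  { apply is_lim_seq_mult'; [apply (is_lim_seq_incr_1 (rgamma_seq s)), Hl|exact Hc]. }
  assert (H2 : is_lim_seq (fun n => rgamma_seq s (S n) * c n) (s * l')).
  { apply (is_lim_seq_ext_loc (fun n => s * rgamma_seq (s + 1) n));
      [|apply (is_lim_seq_scal_l _ s l'), Hl'].
    exists 1%nat. intros n Hn. unfold rgamma_seq, c, Rpower.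
    rewrite <- rising_shift, fact_simpl, mult_INR.
    assert (Pn : 0 < INR n) by (apply lt_0_INR; lia).
    assert (PSn : 0 < INR (S n)) by (apply lt_0_INR; lia).
    replace (1 + / INR n) with (INR (S n) / INR n) by (rewrite S_INR; field; lra).
    rewrite ln_div by lra.
    replace (exp ((s + 1) * (ln (INR (S n)) - ln (INR n))))
      with (exp (s * ln (INR (S n))) * exp (ln (INR (S n))) / exp ((s + 1) * ln (INR n))).
    2:{ unfold Rdiv. rewrite <- exp_Ropp, <- !exp_plus. f_equal. ring. }
    rewrite exp_ln by lra.
    pose proof (exp_pos (s * ln (INR (S n)))). pose proof (exp_pos ((s + 1) * ln (INR n))).
    assert (0 < INR (fact n)) by apply (lt_0_INR _ (lt_O_fact n)).
    field. repeat split; lra. }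
  pose proof (is_lim_seq_unique _ _ H1) as U. rewrite (is_lim_seq_unique _ _ H2) in U.
  injection U. lra.
Qed.

Definition bessel_coef (mu : R) (m : nat) : R :=
  (-1) ^ m * rgamma (INR m + mu + 1) / INR (fact m).

Definition bessel_pseries (mu z : R) : R := PSeries (bessel_coef mu) z.

Definition J (mu x : R) : R := Rpower (x / 2) mu * bessel_pseries mu ((x / 2) ^ 2).

Lemma BesselJ_pos_J (mu x : R) : BesselJ_pos mu x = J mu x.
Proof.
  unfold BesselJ_pos, J, bessel_pseries, PSeries. f_equal.
  apply Series_ext. intros m. unfold bessel_coef. rewrite pow_mult. reflexivity.
Qed.

Lemma bessel_coef_succ (mu : R) (n : nat) :
  bessel_coef mu (S n) * (INR (S n) * (INR n + mu + 1)) = - bessel_coef mu n.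
Proof.
  unfold bessel_coef. rewrite (rgamma_succ (INR n + mu + 1)), fact_simpl, mult_INR.
  replace (INR (S n) + mu + 1) with (INR n + mu + 1 + 1) by (rewrite S_INR; ring).
  pose proof (INR_fact_lt_0 n). pose proof (lt_0_INR (S n) (Nat.lt_0_succ n)).
  simpl pow. field. lra.
Qed.

Lemma bessel_coef_shift (mu : R) (n : nat) :
  bessel_coef mu n = (INR n + mu + 1) * bessel_coef (mu + 1) n.
Proof.
  unfold bessel_coef. rewrite (rgamma_succ (INR n + mu + 1)).
  replace (INR n + (mu + 1) + 1) with (INR n + mu + 1 + 1) by ring.
  pose proof (INR_fact_lt_0 n). field. lra.
Qed.

Lemma bessel_coef_derive (mu : R) (n : nat) :
  PS_derive (bessel_coef mu) n = - bessel_coef (mu + 1) n.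
Proof.
  unfold PS_derive, bessel_coef.
  replace (INR (S n) + mu + 1) with (INR n + (mu + 1) + 1) by (rewrite S_INR; ring).
  rewrite fact_simpl, mult_INR.
  pose proof (INR_fact_lt_0 n). pose proof (lt_0_INR (S n) (Nat.lt_0_succ n)).
  simpl pow. field. lra.
Qed.

Lemma eventually_nonincreasing_bounded (b : nat -> R) (n1 : nat) :
  (forall n, (n1 <= n)%nat -> b (S n) <= b n) -> exists M, forall n, b n <= M.
Proof.
  intros Hdec.
  assert (Hinit : forall p, exists M, forall n, (n <= p)%nat -> b n <= M).
  { induction p as [|p [M HM]].
    - exists (b 0%nat). intros n Hn. replace n with 0%nat by lia. lra.
    - exists (Rmax M (b (S p))). intros n Hn.
      destruct (Nat.eq_dec n (S p)) as [->|E]; [apply Rmax_r|].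
      eapply Rle_trans; [apply HM; lia|apply Rmax_l]. }
  assert (Htail : forall k, b (n1 + k)%nat <= b n1).
  { induction k as [|k IH]; [rewrite Nat.add_0_r; lra|].
    rewrite Nat.add_succ_r. eapply Rle_trans; [apply Hdec; lia|exact IH]. }
  destruct (Hinit n1) as [M HM]. exists M. intros n.
  destruct (Compare_dec.le_lt_dec n n1) as [H|H]; [now apply HM|].
  replace n with (n1 + (n - n1))%nat by lia.
  eapply Rle_trans; [apply Htail|apply HM; lia].
Qed.

(* |c_n| r^n is eventually nonincreasing for every r, since |c_n| = (n+1)(n+mu+1) |c_(n+1)|. *)
Lemma bessel_coef_CV_radius (mu : R) : CV_radius (bessel_coef mu) = p_infty.
Proof.
  assert (Hr : forall r, 0 < r -> Rbar_le r (CV_radius (bessel_coef mu))).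
  { intros r Hr. apply (proj1 (CV_radius_bounded (bessel_coef mu)) r).
    destruct (INR_unbounded (r + Rabs mu + 1)) as [n1 Hn1].
    apply (eventually_nonincreasing_bounded _ n1). intros n Hn.
    rewrite !Rabs_mult, <- !RPow_abs, (Rabs_pos_eq r) by lra.
    set (q := INR (S n) * (INR n + mu + 1)).
    assert (Hq : r <= q).
    { unfold q. apply le_INR in Hn. rewrite S_INR.
      pose proof (pos_INR n). pose proof (Rabs_pos mu). pose proof (Rle_abs (- mu)).
      rewrite Rabs_Ropp in *. nra. }
    rewrite <- (Rabs_Ropp (bessel_coef mu n)), <- bessel_coef_succ.
    fold q. rewrite Rabs_mult, (Rabs_pos_eq q) by lra. simpl pow.
    assert (0 <= Rabs (bessel_coef mu (S n)) * r ^ n)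
      by (apply Rmult_le_pos; [apply Rabs_pos|apply pow_le; lra]).
    nra. }
  destruct (CV_radius (bessel_coef mu)) as [c| |] eqn:E; [|reflexivity|].
  - specialize (Hr (Rabs c + 1) ltac:(pose proof (Rabs_pos c); lra)).
    simpl in Hr. pose proof (Rle_abs c). lra.
  - specialize (Hr 1 Rlt_0_1). contradiction.
Qed.

Lemma bessel_coef_inside (mu z : R) : Rbar_lt (Rabs z) (CV_radius (bessel_coef mu)).
Proof. rewrite bessel_coef_CV_radius. exact I. Qed.

Lemma bessel_pseries_derive (mu z : R) :
  is_derive (bessel_pseries mu) z (- bessel_pseries (mu + 1) z).
Proof.
  unfold bessel_pseries. rewrite <- PSeries_opp.
  rewrite (PSeries_ext (PS_opp _) (PS_derive (bessel_coef mu))).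
  - apply is_derive_PSeries, bessel_coef_inside.
  - intros n. rewrite bessel_coef_derive. reflexivity.
Qed.

(* Coefficientwise, c^mu_n = (mu + 1) c^(mu+1)_n + n c^(mu+1)_n. *)
Lemma bessel_pseries_rec (mu z : R) :
  bessel_pseries mu z = (mu + 1) * bessel_pseries (mu + 1) z - z * bessel_pseries (mu + 2) z.
Proof.
  replace (mu + 2) with (mu + 1 + 1) by ring.
  unfold bessel_pseries. set (c := bessel_coef (mu + 1)).
  assert (Hc : Rbar_lt (Rabs z) (CV_radius c)) by apply bessel_coef_inside.
  replace (PSeries (bessel_coef (mu + 1 + 1)) z) with (- PSeries (PS_derive c) z).
  2:{ rewrite <- PSeries_opp. apply PSeries_ext. intros n.
      unfold PS_opp, c. rewrite bessel_coef_derive. unfold opp; simpl. ring. }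
  replace ((mu + 1) * PSeries c z - z * - PSeries (PS_derive c) z)
    with (PSeries (PS_plus (PS_scal (mu + 1) c) (PS_incr_1 (PS_derive c))) z).
  2:{ rewrite PSeries_plus, PSeries_scal, PSeries_incr_1; [ring| |].
      - apply ex_pseries_scal; [apply Rmult_comm|apply CV_radius_inside, Hc].
      - apply ex_pseries_incr_1, ex_pseries_derive, Hc. }
  apply PSeries_ext. intros [|n]; unfold PS_plus, PS_scal, PS_incr_1, PS_derive, c;
    rewrite bessel_coef_shift; [|rewrite S_INR];
    unfold plus, scal, zero; simpl; unfold mult; simpl; ring.
Qed.

Lemma is_derive_J_next (mu x : R) : 0 < x ->
  is_derive (J mu) x (- J (mu + 1) x + mu / x * J mu x).
Proof.
  intros Hx. unfold J.
  assert (H1 : is_derive (fun y => Rpower (y / 2) mu) x (mu / x * Rpower (x / 2) mu)).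
  { unfold Rpower. auto_derive; [lra|]. unfold Rdiv. field. lra. }
  assert (H2 : is_derive (fun y => bessel_pseries mu ((y / 2) ^ 2)) x
                 (x / 2 * - bessel_pseries (mu + 1) ((x / 2) ^ 2))).
  { apply (is_derive_comp (bessel_pseries mu) (fun y => (y / 2) ^ 2));
      [apply bessel_pseries_derive|auto_derive; [auto|field]]. }
  replace (- (Rpower (x / 2) (mu + 1) * bessel_pseries (mu + 1) ((x / 2) ^ 2)) +
           mu / x * (Rpower (x / 2) mu * bessel_pseries mu ((x / 2) ^ 2)))
    with (plus (mult (mu / x * Rpower (x / 2) mu) (bessel_pseries mu ((x / 2) ^ 2)))
               (mult (Rpower (x / 2) mu) (x / 2 * - bessel_pseries (mu + 1) ((x / 2) ^ 2)))).
  - apply (is_derive_mult (fun y => Rpower (y / 2) mu) (fun y => bessel_pseries mu ((y / 2) ^ 2)));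
      auto. intros; apply Rmult_comm.
  - rewrite Rpower_plus, Rpower_1 by lra. unfold plus, mult; simpl. ring.
Qed.

Lemma J_rec (mu x : R) : 0 < x -> J mu x = 2 * (mu + 1) / x * J (mu + 1) x - J (mu + 2) x.
Proof.
  intros Hx. unfold J. rewrite (bessel_pseries_rec mu).
  replace (mu + 2) with (mu + 1 + 1) by ring.
  rewrite !Rpower_plus, !Rpower_1 by lra. field. lra.
Qed.

Lemma is_derive_J_prev (mu x : R) : 0 < x ->
  is_derive (J mu) x (J (mu - 1) x - mu / x * J mu x).
Proof.
  intros Hx. rewrite (J_rec (mu - 1) x Hx).
  replace (mu - 1 + 1) with mu by ring. replace (mu - 1 + 2) with (mu + 1) by ring.
  replace (2 * mu / x * J mu x - J (mu + 1) x - mu / x * J mu x)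
    with (- J (mu + 1) x + mu / x * J mu x) by (field; lra).
  now apply is_derive_J_next.
Qed.

Definition bessel_energy (mu y : R) : R :=
  y * (J mu y ^ 2 + J (mu + 1) y ^ 2) - (1 + 2 * mu) * J mu y * J (mu + 1) y.

Lemma is_derive_bessel_energy (mu y : R) : 0 < y ->
  is_derive (bessel_energy mu) y ((1 + 2 * mu) * J mu y * J (mu + 1) y / y).
Proof.
  intros Hy. unfold bessel_energy.
  pose proof (is_derive_J_next mu y Hy) as D1.
  pose proof (is_derive_J_prev (mu + 1) y Hy) as D2.
  replace (mu + 1 - 1) with mu in D2 by ring.
  auto_derive; [repeat split; eexists; eassumption|].
  replace (Derive (fun x => J mu x) y) with (- J (mu + 1) y + mu / y * J mu y)
    by (symmetry; now apply is_derive_unique).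
  replace (Derive (fun x => J (mu + 1) x) y) with (J mu y - (mu + 1) / y * J (mu + 1) y)
    by (symmetry; now apply is_derive_unique).
  field. lra.
Qed.

Lemma Rabs_mult_le_half_sum_sq (p q : R) : Rabs (p * q) <= (p ^ 2 + q ^ 2) / 2.
Proof.
  pose proof (pow2_ge_0 (p - q)). pose proof (pow2_ge_0 (p + q)).
  apply Rabs_le. split; nra.
Qed.

Lemma bessel_energy_lower (mu y : R) : Rabs (1 + 2 * mu) <= y ->
  y * (J mu y ^ 2 + J (mu + 1) y ^ 2) <= 2 * bessel_energy mu y.
Proof.
  intros Hy. unfold bessel_energy.
  pose proof (Rabs_mult_le_half_sum_sq (J mu y) (J (mu + 1) y)) as H.
  pose proof (Rabs_pos (J mu y * J (mu + 1) y)).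
  pose proof (Rle_abs ((1 + 2 * mu) * J mu y * J (mu + 1) y)) as Hk.
  rewrite Rmult_assoc, Rabs_mult in Hk.
  assert (Rabs (1 + 2 * mu) * Rabs (J mu y * J (mu + 1) y)
          <= y * ((J mu y ^ 2 + J (mu + 1) y ^ 2) / 2))
    by (apply Rmult_le_compat; auto using Rabs_pos).
  lra.
Qed.

(* With c = |1 + 2 mu|, the weight exp (c / y) absorbs the derivative of the energy. *)
Lemma bessel_energy_weighted_le (mu X x : R) : Rabs (1 + 2 * mu) < X -> X <= x ->
  bessel_energy mu x * exp (Rabs (1 + 2 * mu) / x)
  <= bessel_energy mu X * exp (Rabs (1 + 2 * mu) / X).
Proof.
  intros HX Hx. set (c := Rabs (1 + 2 * mu)) in *.
  assert (Hc : 0 <= c) by apply Rabs_pos.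
  set (dG := fun y => exp (c / y) *
    ((1 + 2 * mu) * J mu y * J (mu + 1) y / y - c * bessel_energy mu y / y ^ 2)).
  assert (HdG : forall y, X <= y ->
    derivable_pt_lim (fun y => bessel_energy mu y * exp (c / y)) y (dG y)).
  { intros y Hy. apply is_derive_Reals.
    pose proof (is_derive_bessel_energy mu y ltac:(lra)) as D.
    auto_derive; [split; [eexists; exact D|lra]|].
    replace (Derive (fun x => bessel_energy mu x) y) with ((1 + 2 * mu) * J mu y * J (mu + 1) y / y)
      by (symmetry; now apply is_derive_unique).
    unfold dG, Rdiv. field. lra. }
  assert (HdG_nonpos : forall y, X <= y -> dG y <= 0).
  { intros y Hy. unfold dG. rewrite <- (Rmult_0_r (exp (c / y))).
    apply Rmult_le_compat_l; [apply Rlt_le, exp_pos|].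
    pose proof (bessel_energy_lower mu y ltac:(fold c; lra)) as Hlow.
    pose proof (Rabs_mult_le_half_sum_sq (J mu y) (J (mu + 1) y)) as H.
    pose proof (Rle_abs ((1 + 2 * mu) * J mu y * J (mu + 1) y)) as Hk.
    rewrite Rmult_assoc, Rabs_mult in Hk. fold c in Hk.
    assert (c * Rabs (J mu y * J (mu + 1) y) <= c * ((J mu y ^ 2 + J (mu + 1) y ^ 2) / 2))
      by (apply Rmult_le_compat_l; auto).
    assert (Hy0 : 0 < y) by lra.
    apply Rmult_le_reg_r with (y ^ 2); [apply pow_lt; lra|].
    replace (((1 + 2 * mu) * J mu y * J (mu + 1) y / y - c * bessel_energy mu y / y ^ 2) * y ^ 2)
      with (y * ((1 + 2 * mu) * J mu y * J (mu + 1) y) - c * bessel_energy mu y) by (field; lra).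
    nra. }
  destruct (Req_dec x X) as [->|E]; [lra|].
  destruct (MVT_cor3 _ dG X x ltac:(lra) (fun y H1 _ => HdG y H1)) as [t [Ht1 [Ht2 Et]]].
  rewrite Et. pose proof (HdG_nonpos t Ht1). nra.
Qed.

Lemma J_decay (mu : R) : exists X K, 0 < X /\ 0 <= K /\
  forall x, X <= x -> Rabs (J mu x) <= K / sqrt x.
Proof.
  set (c := Rabs (1 + 2 * mu)). set (X := 1 + c).
  assert (Hc : 0 <= c) by apply Rabs_pos.
  assert (HX : c < X) by (unfold X; lra).
  set (G := bessel_energy mu X * exp (c / X)).
  assert (HG : forall x, X <= x -> x * J mu x ^ 2 <= 2 * G).
  { intros x Hx.
    pose proof (bessel_energy_lower mu x ltac:(fold c; lra)) as Hlow.
    pose proof (bessel_energy_weighted_le mu X x HX Hx) as Hw. fold c G in Hw.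
    assert (1 <= exp (c / x)).
    { pose proof (exp_ineq1_le (c / x)).
      assert (0 <= c / x) by (apply Rdiv_le_0_compat; lra). lra. }
    pose proof (pow2_ge_0 (J (mu + 1) x)). pose proof (pow2_ge_0 (J mu x)).
    assert (0 <= bessel_energy mu x) by nra.
    nra. }
  assert (HG0 : 0 <= 2 * G)
    by (pose proof (HG X (Rle_refl X)); pose proof (pow2_ge_0 (J mu X)); nra).
  exists X, (sqrt (2 * G)). split; [lra|]. split; [apply sqrt_pos|].
  intros x Hx.
  assert (Sx : 0 < sqrt x) by (apply sqrt_lt_R0; lra).
  apply Rmult_le_reg_r with (sqrt x); [exact Sx|].
  unfold Rdiv. rewrite Rmult_assoc, Rinv_l, Rmult_1_r by lra.
  rewrite <- (sqrt_Rsqr (Rabs (J mu x))), <- sqrt_mult_alt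
    by (try apply Rle_0_sqr; apply Rabs_pos).
  apply sqrt_le_1_alt. unfold Rsqr. rewrite <- Rabs_mult, Rabs_pos_eq by nra.
  pose proof (HG x Hx). nra.
Qed.

Fixpoint Cn (c d : R) (n : nat) (h : R -> R) : Prop :=
  match n with
  | O => True
  | S n => (forall x, c < x < d -> ex_derive h x) /\ Cn c d n (Derive h)
  end.

Definition Cinf (c d : R) (h : R -> R) : Prop := forall n, Cn c d n h.

Lemma locally_open_interval (c d x : R) : c < x < d -> locally x (fun t => c < t < d).
Proof.
  apply (locally_open (fun t => c < t < d)); [|easy].
  apply open_and; [apply open_gt|apply open_lt].
Qed.

Lemma Cn_S (c d : R) (n : nat) (h : R -> R) : Cn c d (S n) h -> Cn c d n h.
Proof.
  revert h. induction n as [|n IH]; intros h H; [exact I|].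
  destruct H as [H1 H2]. split; [exact H1|]. apply IH, H2.
Qed.

Lemma Cn_ext (c d : R) (n : nat) (h k : R -> R) :
  (forall x, c < x < d -> h x = k x) -> Cn c d n h -> Cn c d n k.
Proof.
  revert h k. induction n as [|n IH]; intros h k E H; [exact I|]. destruct H as [H1 H2].
  assert (Eloc : forall x, c < x < d -> locally x (fun t => h t = k t)).
  { intros x Hx. eapply filter_imp; [|apply (locally_open_interval c d x Hx)]. exact E. }
  split.
  - intros x Hx. apply (ex_derive_ext_loc h k x (Eloc x Hx)), H1, Hx.
  - apply (IH (Derive h)); [|exact H2].
    intros x Hx. apply Derive_ext_loc, Eloc, Hx.
Qed.

Lemma Cn_const (c d : R) (n : nat) (a : R) : Cn c d n (fun _ => a).
Proof.
  revert a. induction n as [|n IH]; intros a; [exact I|]. split.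
  - intros; apply ex_derive_const.
  - apply (Cn_ext c d n (fun _ => 0)); [intros; symmetry; apply Derive_const|apply IH].
Qed.

Lemma Cn_plus (c d : R) (n : nat) (h k : R -> R) :
  Cn c d n h -> Cn c d n k -> Cn c d n (fun x => h x + k x).
Proof.
  revert h k. induction n as [|n IH]; intros h k Hh Hk; [exact I|].
  destruct Hh as [Hh1 Hh2], Hk as [Hk1 Hk2]. split.
  - intros x Hx. apply (ex_derive_plus h k); auto.
  - apply (Cn_ext c d n (fun x => Derive h x + Derive k x)); [|now apply IH].
    intros x Hx. symmetry. apply Derive_plus; auto.
Qed.

Lemma Cn_mult (c d : R) (n : nat) (h k : R -> R) :
  Cn c d n h -> Cn c d n k -> Cn c d n (fun x => h x * k x).
Proof.
  revert h k. induction n as [|n IH]; intros h k Hh Hk; [exact I|].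
  pose proof (Cn_S _ _ _ _ Hh) as Hh'. pose proof (Cn_S _ _ _ _ Hk) as Hk'.
  destruct Hh as [Hh1 Hh2], Hk as [Hk1 Hk2]. split.
  - intros x Hx. apply ex_derive_mult; auto.
  - apply (Cn_ext c d n (fun x => Derive h x * k x + h x * Derive k x)).
    + intros x Hx. symmetry. apply Derive_mult; auto.
    + apply Cn_plus; apply IH; auto.
Qed.

Lemma Cn_inv (c d : R) (n : nat) (h : R -> R) :
  (forall x, c < x < d -> h x <> 0) -> Cn c d n h -> Cn c d n (fun x => / h x).
Proof.
  intros Hnz. revert h Hnz. induction n as [|n IH]; intros h Hnz Hh; [exact I|].
  pose proof (Cn_S _ _ _ _ Hh) as Hh'. destruct Hh as [Hh1 Hh2]. split.
  - intros x Hx. apply ex_derive_inv; auto.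
  - apply (Cn_ext c d n (fun x => (-1) * Derive h x * (/ h x * / h x))).
    + intros x Hx. rewrite Derive_inv by auto. field. auto.
    + apply Cn_mult; [apply Cn_mult; [apply Cn_const|exact Hh2]|].
      apply Cn_mult; apply IH; auto.
Qed.

Lemma is_derive_rpow_abs (h : R -> R) (p x dh : R) : is_derive h x dh -> h x <> 0 ->
  is_derive (fun y => Rpower (Rabs (h y)) p) x (p * Rpower (Rabs (h x)) p * (dh / h x)).
Proof.
  intros Hd Hx. pose proof (Rabs_pos_lt _ Hx) as Habs.
  replace (p * Rpower (Rabs (h x)) p * (dh / h x))
    with (scal (sign (h x) * dh) (p * / Rabs (h x) * Rpower (Rabs (h x)) p)).
  - apply (is_derive_comp (fun u => Rpower u p) (fun y => Rabs (h y)));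
      [|now apply is_derive_Rabs].
    unfold Rpower. auto_derive; [lra|]. field. lra.
  - unfold scal; simpl; unfold mult; simpl.
    destruct (Rlt_dec 0 (h x)).
    + rewrite sign_eq_1, Rabs_pos_eq by lra. field. lra.
    + rewrite sign_eq_m1, Rabs_left by lra. field. lra.
Qed.

Lemma Cn_rpow_abs (c d : R) (n : nat) (h : R -> R) (p : R) :
  (forall x, c < x < d -> h x <> 0) -> Cn c d n h -> Cn c d n (fun x => Rpower (Rabs (h x)) p).
Proof.
  intros Hnz. induction n as [|n IH]; intros Hh; [exact I|].
  pose proof (Cn_S _ _ _ _ Hh) as Hh'. destruct Hh as [Hh1 Hh2]. split.
  - intros x Hx. eexists. apply is_derive_rpow_abs; [apply Derive_correct|]; auto.
  - apply (Cn_ext c d n (fun x => p * Rpower (Rabs (h x)) p * (Derive h x * / h x))).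
    + intros x Hx. symmetry.
      apply is_derive_unique, is_derive_rpow_abs; [apply Derive_correct|]; auto.
    + apply Cn_mult; [apply Cn_mult; [apply Cn_const|apply IH, Hh']|].
      apply Cn_mult; [exact Hh2|]. apply Cn_inv; auto.
Qed.

Lemma Cinf_of_ex_derive_n (c d : R) (h : R -> R) :
  (forall m x, c < x < d -> ex_derive_n h m x) -> Cinf c d h.
Proof.
  intros H n. revert h H. induction n as [|n IH]; intros h H; [exact I|]. split.
  - intros x Hx. exact (H 1%nat x Hx).
  - apply IH. intros [|m] x Hx; [exact I|].
    apply (ex_derive_ext (Derive_n h (S m))); [|exact (H (S (S m)) x Hx)].
    intros t. rewrite <- Nat.add_1_r. symmetry. apply (Derive_n_comp h m 1 t).
Qed.

Lemma Cinf_ex_derive (c d : R) (h : R -> R) (x : R) : Cinf c d h -> c < x < d -> ex_derive h x.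
Proof. intros H. apply (H 1%nat). Qed.

Lemma Cinf_Derive (c d : R) (h : R -> R) : Cinf c d h -> Cinf c d (Derive h).
Proof. intros H n. apply (H (S n)). Qed.

Lemma Cinf_mult (c d : R) (h k : R -> R) :
  Cinf c d h -> Cinf c d k -> Cinf c d (fun x => h x * k x).
Proof. intros Hh Hk n. apply Cn_mult; auto. Qed.

Lemma Cinf_div (c d : R) (h k : R -> R) : (forall x, c < x < d -> k x <> 0) ->
  Cinf c d h -> Cinf c d k -> Cinf c d (fun x => h x / k x).
Proof. intros Hnz Hh Hk n. apply Cn_mult, Cn_inv; auto. Qed.

Lemma Cinf_rpow_abs (c d : R) (h : R -> R) (p : R) :
  (forall x, c < x < d -> h x <> 0) -> Cinf c d h -> Cinf c d (fun x => Rpower (Rabs (h x)) p).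
Proof. intros Hnz Hh n. apply Cn_rpow_abs; auto. Qed.

Lemma Cinf_sigma (nu : R) (f g : R -> R) (c d : R) :
  Cinf c d f -> Cinf c d g ->
  (forall x, c < x < d -> g x <> 0) -> (forall x, c < x < d -> Derive g x <> 0) ->
  forall k, Cinf c d (sigma nu f g k).
Proof.
  intros Hf Hg Hg0 Hg1 k. induction k as [|k IH]; [exact Hf|].
  assert (Hpow : Cinf c d (fun x => Rpower (Rabs (g x)) (nu + INR (S k))))
    by now apply Cinf_rpow_abs.
  apply Cinf_mult; [exact Hpow|]. apply Cinf_Derive, Cinf_div; [| |apply Cinf_mult].
  - intros x Hx. apply Rmult_integral_contrapositive_currified; [apply Rgt_not_eq, exp_pos|auto].
  - exact IH.
  - exact Hpow.
  - apply Cinf_Derive, Hg.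
Qed.

Lemma Cinf_continuous (c d : R) (h : R -> R) (x : R) :
  Cinf c d h -> c < x < d -> continuous h x.
Proof.
  intros H Hx. apply (ex_derive_continuous (K := R_AbsRing) (V := R_NormedModule)).
  now apply (Cinf_ex_derive c d).
Qed.

Lemma Cinf_continuity_pt (c d : R) (h : R -> R) (x : R) :
  Cinf c d h -> c < x < d -> continuity_pt h x.
Proof. intros H Hx. apply continuity_pt_filterlim, (Cinf_continuous c d); auto. Qed.

Definition by_parts_factor (g : R -> R) (mu : R) (h : R -> R) (y : R) : R :=
  h y / (Rpower (Rabs (g y)) mu * Derive g y).

Definition sigma_op (g : R -> R) (mu : R) (h : R -> R) (x : R) : R :=
  Rpower (Rabs (g x)) mu * Derive (by_parts_factor g mu h) x.

Lemma sigma_S (nu : R) (f g : R -> R) (k : nat) :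
  sigma nu f g (S k) = sigma_op g (nu + INR (S k)) (sigma nu f g k).
Proof. reflexivity. Qed.

Section ByParts.

Variables (g : R -> R) (c d s : R).
Hypothesis Hg : Cinf c d g.
Hypothesis Hs : s = 1 \/ s = -1.
Hypothesis Hsg : forall x, c < x < d -> 0 < s * g x.
Hypothesis Hdg : forall x, c < x < d -> Derive g x <> 0.

Lemma sign_g (x : R) : c < x < d -> sign (g x) = s.
Proof.
  intros Hx. specialize (Hsg x Hx).
  destruct Hs as [->| ->]; [apply sign_eq_1|apply sign_eq_m1]; lra.
Qed.

Lemma g_neq_0 (x : R) : c < x < d -> g x <> 0.
Proof. intros Hx E. specialize (Hsg x Hx). rewrite E in Hsg. lra. Qed.

Lemma Rabs_g (x : R) : c < x < d -> Rabs (g x) = s * g x.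
Proof.
  intros Hx. specialize (Hsg x Hx).
  destruct Hs as [->| ->]; [rewrite Rabs_pos_eq|rewrite Rabs_left]; lra.
Qed.

Lemma is_derive_g (x : R) : c < x < d -> is_derive g x (Derive g x).
Proof. intros Hx. apply Derive_correct, (Cinf_ex_derive c d g x Hg Hx). Qed.

Lemma is_derive_J_abs_g (omega mu x : R) : 0 < omega -> c < x < d ->
  is_derive (fun y => J mu (omega * Rabs (g y))) x
    (omega * s * Derive g x *
     (J (mu - 1) (omega * Rabs (g x)) - mu / (omega * Rabs (g x)) * J mu (omega * Rabs (g x)))).
Proof.
  intros Ho Hx.
  assert (Hpos : 0 < omega * Rabs (g x))
    by (apply Rmult_lt_0_compat; [lra|apply Rabs_pos_lt, g_neq_0, Hx]).
  eapply is_derive_ext; [intros; reflexivity|].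
  replace (omega * s * Derive g x * _) with
    (scal (omega * (sign (g x) * Derive g x))
       (J (mu - 1) (omega * Rabs (g x)) - mu / (omega * Rabs (g x)) * J mu (omega * Rabs (g x)))).
  - apply (is_derive_comp (J mu) (fun y => omega * Rabs (g y))); [now apply is_derive_J_prev|].
    apply (is_derive_scal (fun y => Rabs (g y))).
    apply is_derive_Rabs; [apply is_derive_g|apply g_neq_0]; exact Hx.
  - rewrite sign_g by exact Hx. unfold scal; simpl; unfold mult; simpl. ring.
Qed.

Lemma is_derive_rpow_J (omega mu x : R) : 0 < omega -> c < x < d ->
  is_derive (fun y => Rpower (Rabs (g y)) mu * J mu (omega * Rabs (g y))) x
    (Rpower (Rabs (g x)) mu * J (mu - 1) (omega * Rabs (g x)) * (omega * s * Derive g x)).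
Proof.
  intros Ho Hx.
  pose proof (is_derive_rpow_abs g mu x _ (is_derive_g x Hx) (g_neq_0 x Hx)) as D1.
  pose proof (is_derive_mult _ _ _ _ _ D1 (is_derive_J_abs_g omega mu x Ho Hx)
                ltac:(intros; apply Rmult_comm)) as D.
  eapply is_derive_ext; [intros; reflexivity|].
  replace (Rpower (Rabs (g x)) mu * J (mu - 1) (omega * Rabs (g x)) * (omega * s * Derive g x))
    with (plus (mult (mu * Rpower (Rabs (g x)) mu * (Derive g x / g x)) (J mu (omega * Rabs (g x))))
               (mult (Rpower (Rabs (g x)) mu)
                     (omega * s * Derive g x * (J (mu - 1) (omega * Rabs (g x))
                        - mu / (omega * Rabs (g x)) * J mu (omega * Rabs (g x)))))).
  - exact D.
  - unfold plus, mult; simpl. rewrite (Rabs_g x Hx).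
    pose proof (g_neq_0 x Hx). assert (s <> 0) by (destruct Hs; lra).
    field. repeat split; auto. lra.
Qed.

Lemma ex_derive_rpow_J_derive (omega mu x : R) : 0 < omega -> c < x < d ->
  ex_derive (fun y =>
    Rpower (Rabs (g y)) mu * J (mu - 1) (omega * Rabs (g y)) * (omega * s * Derive g y)) x.
Proof.
  intros Ho Hx. apply ex_derive_mult; [apply ex_derive_mult|].
  - eexists. apply is_derive_rpow_abs; [apply is_derive_g|apply g_neq_0]; exact Hx.
  - eexists. now apply is_derive_J_abs_g.
  - apply ex_derive_mult; [apply ex_derive_const|].
    apply (Cinf_ex_derive c d); [apply Cinf_Derive, Hg|exact Hx].
Qed.

Lemma Cinf_by_parts_factor (mu : R) (h : R -> R) :
  Cinf c d h -> Cinf c d (by_parts_factor g mu h).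
Proof.
  intros Hh. apply Cinf_div; [|exact Hh|apply Cinf_mult; [|apply Cinf_Derive, Hg]].
  - intros x Hx. apply Rmult_integral_contrapositive_currified; [apply Rgt_not_eq, exp_pos|auto].
  - apply Cinf_rpow_abs; [exact g_neq_0|exact Hg].
Qed.

Lemma Cinf_sigma_op (mu : R) (h : R -> R) : Cinf c d h -> Cinf c d (sigma_op g mu h).
Proof.
  intros Hh. apply Cinf_mult; [apply Cinf_rpow_abs; [exact g_neq_0|exact Hg]|].
  now apply Cinf_Derive, Cinf_by_parts_factor.
Qed.

Lemma ex_RInt_J_abs_g (a b omega mu : R) (h : R -> R) :
  c < a -> a < b -> b < d -> 0 < omega -> Cinf c d h ->
  ex_RInt (fun x => h x * J mu (omega * Rabs (g x))) a b.
Proof.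
  intros Hca Hab Hbd Ho Hh. apply (ex_RInt_continuous (V := R_CompleteNormedModule)).
  intros x Hx. rewrite Rmin_left, Rmax_right in Hx by lra.
  apply (continuous_mult (K := R_AbsRing)); [apply (Cinf_continuous c d); [exact Hh|lra]|].
  apply (ex_derive_continuous (K := R_AbsRing) (V := R_NormedModule)).
  eexists. apply is_derive_J_abs_g; [exact Ho|lra].
Qed.

Lemma RInt_J_by_parts (a b omega mu : R) (h : R -> R) :
  c < a -> a < b -> b < d -> 0 < omega -> Cinf c d h ->
  RInt (fun x => h x * J (mu - 1) (omega * Rabs (g x))) a b =
  / (omega * s) *
    ((h b / Derive g b * J mu (omega * Rabs (g b)) - h a / Derive g a * J mu (omega * Rabs (g a)))
     - RInt (fun x => sigma_op g mu h x * J mu (omega * Rabs (g x))) a b).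
Proof.
  intros Hca Hab Hbd Ho Hh.
  set (P := by_parts_factor g mu h).
  set (Phi := fun y => Rpower (Rabs (g y)) mu * J mu (omega * Rabs (g y))).
  set (dPhi := fun x =>
    Rpower (Rabs (g x)) mu * J (mu - 1) (omega * Rabs (g x)) * (omega * s * Derive g x)).
  set (I := RInt (fun x => sigma_op g mu h x * J mu (omega * Rabs (g x))) a b).
  assert (HU : forall x, Rmin a b <= x <= Rmax a b -> c < x < d).
  { intros x. rewrite Rmin_left, Rmax_right by lra. lra. }
  assert (HP : Cinf c d P) by now apply Cinf_by_parts_factor.
  assert (HI : is_RInt (fun x => scal (Derive P x) (Phi x)) a b I).
  { apply (is_RInt_ext (fun x => sigma_op g mu h x * J mu (omega * Rabs (g x)))).
    - intros x _. unfold sigma_op, Phi. fold P.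
      rewrite (Rmult_comm (Rpower _ _)). apply Rmult_assoc.
    - apply (RInt_correct (V := R_CompleteNormedModule)), ex_RInt_J_abs_g; auto.
      now apply Cinf_sigma_op. }
  pose proof (is_RInt_scal_derive_r P Phi (Derive P) dPhi a b I
    (fun x Hx => Derive_correct _ _ (Cinf_ex_derive c d P x HP (HU x Hx)))
    (fun x Hx => is_derive_rpow_J omega mu x Ho (HU x Hx))
    (fun x Hx => Cinf_continuous c d _ x (Cinf_Derive c d P HP) (HU x Hx))
    (fun x Hx => ex_derive_continuous (K := R_AbsRing) (V := R_NormedModule) _ _
                   (ex_derive_rpow_J_derive omega mu x Ho (HU x Hx))) HI) as Hparts.
  apply (is_RInt_scal _ _ _ (/ (omega * s))) in Hparts.
  assert (Hs0 : s <> 0) by (destruct Hs; lra).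
  rewrite (RInt_ext _ (fun x => scal (/ (omega * s)) (scal (P x) (dPhi x)))).
  2:{ intros x Hx. pose proof (Hdg x (HU x ltac:(lra))).
      pose proof (exp_pos (mu * ln (Rabs (g x)))).
      unfold scal, P, by_parts_factor, dPhi, Rpower; simpl; unfold mult; simpl.
      field. repeat split; lra. }
  lazymatch goal with |- RInt ?F a b = _ => rewrite (is_RInt_unique F a b _ Hparts) end.
  fold I. unfold P, by_parts_factor, Phi, scal, minus, plus, opp; simpl.
  unfold mult, plus, opp; simpl.
  pose proof (Hdg b ltac:(lra)). pose proof (Hdg a ltac:(lra)).
  pose proof (exp_pos (mu * ln (Rabs (g b)))). pose proof (exp_pos (mu * ln (Rabs (g a)))).
  unfold Rpower. field. repeat split; lra.
Qed.

End ByParts.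

Lemma bounded_on_segment (h : R -> R) (a b : R) : a <= b ->
  (forall x, a <= x <= b -> continuity_pt h x) ->
  exists M, forall x, a <= x <= b -> Rabs (h x) <= M.
Proof.
  intros Hab Hc.
  destruct (continuity_ab_maj (fun x => Rabs (h x)) a b Hab) as [xM [HM _]].
  - intros x Hx. apply continuity_pt_comp with (f1 := h) (f2 := Rabs);
      [now apply Hc|apply Rcontinuity_abs].
  - exists (Rabs (h xM)). exact HM.
Qed.

Lemma inv_pow_inv_sqrt (w : R) (N : nat) : 0 < w ->
  (/ w) ^ S N * / sqrt w = Rpower w (- (INR N + 3 / 2)).
Proof.
  intros Hw. rewrite Rpower_Ropp.
  replace (INR N + 3 / 2) with (INR (S N) + / 2) by (rewrite S_INR; field).
  rewrite Rpower_plus, Rpower_pow, Rpower_sqrt, pow_inv, Rinv_mult by lra. reflexivity.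
Qed.

Section Remainder.

Variables (g : R -> R) (c d s : R).
Hypothesis Hg : Cinf c d g.
Hypothesis Hs : s = 1 \/ s = -1.
Hypothesis Hsg : forall x, c < x < d -> 0 < s * g x.
Hypothesis Hdg : forall x, c < x < d -> Derive g x <> 0.
Variables (nu : R) (f : R -> R) (a b : R).
Hypothesis Hca : c < a.
Hypothesis Hab : a < b.
Hypothesis Hbd : b < d.
Hypothesis Hf : Cinf c d f.

Definition remainder (w : R) (k : nat) : R :=
  RInt (fun x => sigma nu f g k x * J (nu + INR k) (w * Rabs (g x))) a b.

Definition boundary_term (w : R) (k : nat) : R :=
  sigma nu f g (k - 1) b / Derive g b * J (nu + INR k) (w * Rabs (g b))
  - sigma nu f g (k - 1) a / Derive g a * J (nu + INR k) (w * Rabs (g a)).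

Lemma Cinf_sigma_g (k : nat) : Cinf c d (sigma nu f g k).
Proof. apply Cinf_sigma; auto. exact (g_neq_0 g c d s Hsg). Qed.

Lemma remainder_S (w : R) (k : nat) : 0 < w ->
  remainder w k = / (w * s) * (boundary_term w (S k) - remainder w (S k)).
Proof.
  intros Hw. unfold remainder, boundary_term. replace (S k - 1)%nat with k by lia.
  replace (nu + INR k) with (nu + INR (S k) - 1) by (rewrite S_INR; ring).
  rewrite sigma_S. apply (RInt_J_by_parts g c d s); auto. apply Cinf_sigma_g.
Qed.

Lemma remainder_telescope (w : R) (N : nat) : 0 < w ->
  remainder w 0 + sum_n_m (fun k => (- / (w * s)) ^ k * boundary_term w k) 1 N
  = (- / (w * s)) ^ N * remainder w N.
Proof.
  intros Hw. induction N as [|N IH].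
  - rewrite sum_n_m_zero by lia. unfold zero; simpl. ring.
  - rewrite sum_n_Sm by lia. unfold plus; simpl.
    rewrite <- Rplus_assoc, IH, (remainder_S w N Hw). simpl pow. ring.
Qed.

Lemma J_abs_g_decay (mu : R) : exists K w0, 0 < w0 /\ 0 <= K /\
  forall w x, w0 <= w -> a <= x <= b -> Rabs (J mu (w * Rabs (g x))) <= K / sqrt w.
Proof.
  destruct (J_decay mu) as [X [K [HX [HK HJ]]]].
  destruct (continuity_ab_min (fun x => Rabs (g x)) a b ltac:(lra)) as [xm [Hxm Hxm']].
  { intros x Hx. apply continuity_pt_comp with (f1 := g) (f2 := Rabs); [|apply Rcontinuity_abs].
    apply (Cinf_continuity_pt c d); [exact Hg|lra]. }
  set (m := Rabs (g xm)).
  assert (Hm : 0 < m) by (apply Rabs_pos_lt, (g_neq_0 g c d s Hsg); lra).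
  exists (K / sqrt m), (X / m). split; [apply Rdiv_lt_0_compat; lra|].
  split; [apply Rdiv_le_0_compat; [exact HK|now apply sqrt_lt_R0]|].
  intros w x Hw Hx.
  assert (Hw0 : 0 < w) by (apply Rlt_le_trans with (X / m); [apply Rdiv_lt_0_compat|]; lra).
  assert (Hmx : m <= Rabs (g x)) by (apply Hxm, Hx).
  assert (HwX : X <= w * m).
  { replace X with (X / m * m) by (field; lra). apply Rmult_le_compat_r; lra. }
  eapply Rle_trans; [apply HJ; nra|].
  unfold Rdiv. rewrite Rmult_assoc, <- Rinv_mult, <- sqrt_mult by lra.
  apply Rmult_le_compat_l; [exact HK|].
  apply Rinv_le_contravar; [apply sqrt_lt_R0; nra|]. apply sqrt_le_1; nra.
Qed.

Lemma remainder_bound (N : nat) : exists M w0, 0 < w0 /\ forall w, w0 <= w ->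
  Rabs ((- / (w * s)) ^ N * remainder w N) <= M * Rpower w (- (INR N + 3 / 2)).
Proof.
  destruct (J_abs_g_decay (nu + INR (S N))) as [K [w0 [Hw0 [HK HJ]]]].
  destruct (bounded_on_segment (sigma nu f g (S N)) a b) as [Ms HMs]; [lra| |].
  { intros x Hx. apply (Cinf_continuity_pt c d); [apply Cinf_sigma_g|lra]. }
  set (A := Rabs (sigma nu f g N b / Derive g b) + Rabs (sigma nu f g N a / Derive g a)).
  exists ((A + (b - a) * Ms) * K), w0. split; [exact Hw0|]. intros w Hw.
  assert (Hw0' : 0 < w) by lra.
  assert (Hbt : Rabs (boundary_term w (S N)) <= A * (K / sqrt w)).
  { unfold boundary_term. replace (S N - 1)%nat with N by lia.
    eapply Rle_trans; [apply Rabs_triang|]. rewrite Rabs_Ropp, !Rabs_mult.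
    unfold A. rewrite Rmult_plus_distr_r.
    apply Rplus_le_compat; apply Rmult_le_compat_l; try apply Rabs_pos; apply HJ; lra. }
  assert (Hrem : Rabs (remainder w (S N)) <= (b - a) * (Ms * (K / sqrt w))).
  { apply abs_RInt_le_const; [lra| |].
    - apply (ex_RInt_J_abs_g g c d s); auto. apply Cinf_sigma_g.
    - intros x Hx. rewrite Rabs_mult.
      apply Rmult_le_compat; try apply Rabs_pos; [apply HMs|apply HJ]; lra. }
  assert (Hinv : Rabs (/ (w * s)) = / w).
  { rewrite Rabs_inv, Rabs_mult, (Rabs_pos_eq w) by lra.
    destruct Hs as [-> | ->]; [rewrite Rabs_R1|rewrite Rabs_m1]; now rewrite Rmult_1_r. }
  rewrite (remainder_S w N Hw0'), Rabs_mult, <- RPow_abs, Rabs_Ropp, Hinv, Rabs_mult, Hinv.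
  rewrite <- inv_pow_inv_sqrt by exact Hw0'. simpl pow.
  assert (Hb : Rabs (boundary_term w (S N) - remainder w (S N))
                <= (A + (b - a) * Ms) * K * / sqrt w).
  { eapply Rle_trans; [apply Rabs_triang|]. rewrite Rabs_Ropp. unfold Rdiv in *. nra. }
  pose proof (pow_lt (/ w) N (Rinv_0_lt_compat w Hw0')). pose proof (Rinv_0_lt_compat w Hw0').
  replace ((A + (b - a) * Ms) * K * (/ w * (/ w) ^ N * / sqrt w))
    with ((/ w) ^ N * (/ w * ((A + (b - a) * Ms) * K * / sqrt w))) by ring.
  apply Rmult_le_compat_l; [lra|]. apply Rmult_le_compat_l; [lra|exact Hb].
Qed.

End Remainder.

Lemma nonvanishing_constant_sign (g : R -> R) (a b : R) :
  (forall x, a <= x <= b -> continuity_pt g x) -> (forall x, a <= x <= b -> g x <> 0) ->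
  exists s, (s = 1 \/ s = -1) /\ forall x, a <= x <= b -> 0 < s * g x.
Proof.
  intros Hc Hnz.
  destruct (Rle_lt_dec a b) as [Hab|Hab]; [|exists 1; split; [now left|intros x Hx; lra]].
  assert (Hga : g a <> 0) by (apply Hnz; lra).
  set (s := if Rlt_dec 0 (g a) then 1 else -1).
  assert (Hs : s = 1 \/ s = -1) by (unfold s; destruct (Rlt_dec 0 (g a)); auto).
  assert (Hsa : 0 < s * g a) by (unfold s; destruct (Rlt_dec 0 (g a)); lra).
  exists s. split; [exact Hs|].
  intros x Hx. destruct (Rlt_le_dec 0 (s * g x)) as [H|H]; [exact H|exfalso].
  assert (Hgx : g x <> 0) by (apply Hnz; exact Hx).
  assert (Hsx : s * g x < 0) by (destruct Hs as [-> | ->]; lra).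
  destruct (Ranalysis5.IVT_interv (fun t => - (s * g t)) a x) as [z [Hz Ez]].
  - intros t Ht. apply continuity_pt_opp, continuity_pt_scal, Hc. lra.
  - destruct (Req_dec x a) as [->|E]; lra.
  - lra.
  - lra.
  - apply (Hnz z); [lra|]. destruct Hs as [-> | ->]; lra.
Qed.

Lemma pos_near_point (phi : R -> R) (p : R) : continuity_pt phi p -> 0 < phi p ->
  exists del, 0 < del /\ forall t, Rabs (t - p) < del -> 0 < phi t.
Proof.
  intros Hc Hp. destruct (Hc (phi p) Hp) as [del [Hdel H]].
  exists del. split; [lra|]. intros t Ht.
  destruct (Req_dec t p) as [->|E]; [exact Hp|].
  specialize (H t (conj (conj I (not_eq_sym E)) Ht)). simpl in H. unfold R_dist in H.
  apply Rabs_def2 in H. lra.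
Qed.

Lemma pos_near_segment (phi : R -> R) (a b : R) : a <= b ->
  continuity_pt phi a -> continuity_pt phi b -> (forall x, a <= x <= b -> 0 < phi x) ->
  exists del, 0 < del /\ forall x, a - del < x < b + del -> 0 < phi x.
Proof.
  intros Hab Ha Hb Hpos.
  destruct (pos_near_point phi a Ha) as [da [Hda Pa]]; [apply Hpos; lra|].
  destruct (pos_near_point phi b Hb) as [db [Hdb Pb]]; [apply Hpos; lra|].
  exists (Rmin da db). split; [now apply Rmin_pos|]. intros x Hx.
  pose proof (Rmin_l da db). pose proof (Rmin_r da db).
  destruct (Rlt_le_dec x a); [apply Pa; rewrite Rabs_left; lra|].
  destruct (Rle_lt_dec x b); [apply Hpos; lra|].
  apply Pb. rewrite Rabs_pos_eq; lra.
Qed.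

Lemma exists_sign_neighbourhood (f g : R -> R) (a b : R) : a < b ->
  smooth_on f a b -> smooth_on g a b ->
  (forall x, a <= x <= b -> g x <> 0) -> (forall x, a <= x <= b -> Derive g x <> 0) ->
  exists c d s, c < a /\ b < d /\ Cinf c d f /\ Cinf c d g /\ (s = 1 \/ s = -1) /\
    (forall x, c < x < d -> 0 < s * g x) /\ (forall x, c < x < d -> Derive g x <> 0).
Proof.
  intros Hab [c1 [d1 [Hc1 [Hd1 Hf]]]] [c2 [d2 [Hc2 [Hd2 Hg]]]] Hg0 Hg1.
  pose proof (Rmax_l c1 c2). pose proof (Rmax_r c1 c2).
  pose proof (Rmin_l d1 d2). pose proof (Rmin_r d1 d2).
  set (c0 := Rmax c1 c2) in *. set (d0 := Rmin d1 d2) in *.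
  assert (Hc0 : c0 < a) by (apply Rmax_lub_lt; lra).
  assert (Hd0 : b < d0) by (apply Rmin_glb_lt; lra).
  assert (HgC : Cinf c0 d0 g) by (apply Cinf_of_ex_derive_n; intros m x Hx; apply Hg; lra).
  assert (Hgc : forall x, a <= x <= b -> continuity_pt g x)
    by (intros; apply (Cinf_continuity_pt c0 d0); [exact HgC|lra]).
  assert (Hdgc : forall x, a <= x <= b -> continuity_pt (fun t => Derive g t * Derive g t) x).
  { intros x Hx.
    apply continuity_pt_mult; apply (Cinf_continuity_pt c0 d0); try lra; now apply Cinf_Derive. }
  destruct (nonvanishing_constant_sign g a b Hgc Hg0) as [s [Hs Hsg]].
  destruct (pos_near_segment (fun t => s * g t) a b ltac:(lra)
    (continuity_pt_scal _ _ _ (Hgc a ltac:(lra))) (continuity_pt_scal _ _ _ (Hgc b ltac:(lra))) Hsg)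
    as [del1 [Hdel1 Hpos1]].
  destruct (pos_near_segment (fun t => Derive g t * Derive g t) a b ltac:(lra)
    (Hdgc a ltac:(lra)) (Hdgc b ltac:(lra))) as [del2 [Hdel2 Hpos2]].
  { intros x Hx. pose proof (Hg1 x Hx). nra. }
  pose proof (Rmin_l del1 del2). pose proof (Rmin_r del1 del2).
  pose proof (Rmin_pos del1 del2 Hdel1 Hdel2).
  pose proof (Rmax_l c0 (a - Rmin del1 del2)). pose proof (Rmax_r c0 (a - Rmin del1 del2)).
  pose proof (Rmin_l d0 (b + Rmin del1 del2)). pose proof (Rmin_r d0 (b + Rmin del1 del2)).
  set (c := Rmax c0 (a - Rmin del1 del2)) in *. set (d := Rmin d0 (b + Rmin del1 del2)) in *.
  exists c, d, s. repeat split; try assumption.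
  - apply Rmax_lub_lt; lra.
  - apply Rmin_glb_lt; lra.
  - apply Cinf_of_ex_derive_n. intros m x Hx. apply Hf. lra.
  - apply Cinf_of_ex_derive_n. intros m x Hx. apply Hg. lra.
  - intros x Hx. apply Hpos1. lra.
  - intros x Hx E. assert (P := Hpos2 x ltac:(lra)). simpl in P. rewrite E in P. lra.
Qed.

Lemma scal_C (r : R) (p : C) : scal r p = (r * fst p, r * snd p).
Proof. destruct p. reflexivity. Qed.

Lemma Cmod_scal (r : R) (p : C) : Cmod (scal r p) = Rabs r * Cmod p.
Proof.
  rewrite <- Cmod_R, <- Cmod_mult, scal_C. destruct p as [p1 p2].
  unfold Cmult, RtoC; simpl. f_equal; f_equal; ring.
Qed.

Lemma sum_n_m_scal_C (u : nat -> R) (p : C) (n m : nat) :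
  @sum_n_m C_AbelianMonoid (fun k => scal (u k) p) n m = scal (sum_n_m u n m) p.
Proof.
  destruct p as [p1 p2].
  assert (Hzero : (zero : C) = scal (zero : R) (p1, p2)).
  { rewrite scal_C. unfold zero; simpl. unfold RtoC. f_equal; ring. }
  induction m as [|m IH].
  - destruct n; [rewrite !sum_n_n; reflexivity|]. rewrite !sum_n_m_zero by lia. exact Hzero.
  - destruct (Compare_dec.le_lt_dec n (S m)) as [H|H]; [|rewrite !sum_n_m_zero by lia; exact Hzero].
    destruct (Nat.eq_dec n (S m)) as [->|E]; [rewrite !sum_n_n; reflexivity|].
    rewrite !sum_n_Sm, IH, !scal_C by lia. unfold plus; simpl. unfold Cplus; simpl. f_equal; ring.
Qed.

Lemma RInt_scal_C (u : R -> R) (a b : R) (p : C) : ex_RInt u a b ->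
  @RInt C_R_CompleteNormedModule (fun x => scal (u x) p) a b = scal (RInt u a b) p.
Proof.
  intros H. apply is_RInt_unique. apply (RInt_correct (V := R_CompleteNormedModule)) in H.
  destruct p as [p1 p2].
  pose proof (is_RInt_fct_extend_pair (U := R_NormedModule) (V := R_NormedModule)
    (fun x => (scal p1 (u x), scal p2 (u x))) a b _ _ (is_RInt_scal _ _ _ p1 _ H)
    (is_RInt_scal _ _ _ p2 _ H)) as Hpair.
  replace (scal (RInt u a b) (p1, p2)) with ((scal p1 (RInt u a b), scal p2 (RInt u a b)) : C).
  2:{ rewrite scal_C. unfold scal; simpl; unfold mult; simpl. f_equal; ring. }
  eapply (is_RInt_ext (V := C_R_NormedModule)); [|exact Hpair].
  intros x _. rewrite scal_C. unfold scal; simpl; unfold mult; simpl. f_equal; ring.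
Qed.

Definition bessel_phase (s mu : R) : C :=
  if Rlt_dec 0 s then RtoC 1 else (cos (PI * mu), sin (PI * mu)).

Lemma Cmod_bessel_phase (s mu : R) : Cmod (bessel_phase s mu) = 1.
Proof.
  unfold bessel_phase. destruct (Rlt_dec 0 s); [apply Cmod_1|].
  unfold Cmod; cbn [fst snd]. rewrite <- sqrt_1. f_equal.
  rewrite <- (sin2_cos2 (PI * mu)). unfold Rsqr. ring.
Qed.

Lemma bessel_phase_shift (s mu : R) (k : nat) : s = 1 \/ s = -1 ->
  bessel_phase s (mu + INR k) = scal (s ^ k) (bessel_phase s mu).
Proof.
  intros Hs. rewrite scal_C. unfold bessel_phase.
  destruct (Rlt_dec 0 s) as [Hs0|Hs0].
  - replace s with 1 by (destruct Hs; lra). rewrite pow1. unfold RtoC; simpl. f_equal; ring.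
  - replace s with (-1) by (destruct Hs; lra). simpl fst; simpl snd.
    induction k as [|k IH]; [simpl; rewrite Rplus_0_r; f_equal; ring|].
    rewrite S_INR. replace (PI * (mu + (INR k + 1))) with (PI * (mu + INR k) + PI) by ring.
    rewrite neg_cos, neg_sin. injection IH as E1 E2. rewrite E1, E2. simpl pow. f_equal; ring.
Qed.

Lemma BesselJ_phase (s mu y : R) : s = 1 \/ s = -1 -> 0 < s * y ->
  BesselJ mu y = scal (J mu (Rabs y)) (bessel_phase s mu).
Proof.
  intros Hs Hy. rewrite scal_C. unfold BesselJ, bessel_phase.
  destruct Hs as [-> | ->].
  - destruct (Rlt_dec 0 y); [|lra]. destruct (Rlt_dec 0 1); [|lra].
    rewrite Rabs_pos_eq, BesselJ_pos_J by lra. unfold RtoC; simpl. f_equal; ring.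
  - destruct (Rlt_dec 0 y); [lra|]. destruct (Rlt_dec y 0); [|lra].
    destruct (Rlt_dec 0 (-1)); [lra|].
    rewrite Rabs_left, BesselJ_pos_J by lra. unfold Cmult, RtoC; simpl. f_equal; ring.
Qed.

Section Expansion.

Variables (nu a b c d s : R) (f g : R -> R).
Hypothesis Hca : c < a.
Hypothesis Hab : a < b.
Hypothesis Hbd : b < d.
Hypothesis Hf : Cinf c d f.
Hypothesis Hg : Cinf c d g.
Hypothesis Hs : s = 1 \/ s = -1.
Hypothesis Hsg : forall x, c < x < d -> 0 < s * g x.
Hypothesis Hdg : forall x, c < x < d -> Derive g x <> 0.

Lemma BesselJ_g (w mu x : R) : 0 < w -> c < x < d ->
  BesselJ mu (w * g x) = scal (J mu (w * Rabs (g x))) (bessel_phase s mu).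
Proof.
  intros Hw Hx.
  assert (Hy : 0 < s * (w * g x)).
  { replace (s * (w * g x)) with (w * (s * g x)) by ring. apply Rmult_lt_0_compat; auto. }
  rewrite (BesselJ_phase s mu _ Hs Hy), Rabs_mult, (Rabs_pos_eq w) by lra. reflexivity.
Qed.

Lemma Hnu_phase (w : R) : 0 < w ->
  Hnu nu f g a b w = scal (remainder g nu f a b w 0) (bessel_phase s nu).
Proof.
  intros Hw. unfold Hnu, remainder.
  rewrite (RInt_ext (V := C_R_CompleteNormedModule) _
             (fun x => scal (f x * J nu (w * Rabs (g x))) (bessel_phase s nu))).
  - rewrite RInt_scal_C; [simpl; rewrite Rplus_0_r; reflexivity|].
    now apply (ex_RInt_J_abs_g g c d s).
  - intros x Hx. rewrite Rmin_left, Rmax_right in Hx by lra.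
    rewrite BesselJ_g, scal_assoc by lra. reflexivity.
Qed.

Lemma asym_term_phase (w : R) (k : nat) : 0 < w ->
  asym_term nu f g a b w k =
  scal ((- / (w * s)) ^ k * boundary_term g nu f a b w k) (bessel_phase s nu).
Proof.
  intros Hw. unfold asym_term, boundary_term.
  rewrite !BesselJ_g, bessel_phase_shift by (auto; lra).
  replace (- / (w * s)) with (/ (- w) * s) by (destruct Hs as [-> | ->]; field; lra).
  rewrite Rpow_mult_distr, pow_inv.
  destruct (bessel_phase s nu) as [p1 p2]. rewrite !scal_C. simpl.
  unfold minus, plus, opp; simpl. f_equal; ring.
Qed.

Lemma expansion_error (w : R) (N : nat) : 0 < w ->
  minus (Hnu nu f g a b w) (opp (sum_n_m (asym_term nu f g a b w) 1 N))
  = scal ((- / (w * s)) ^ N * remainder g nu f a b w N) (bessel_phase s nu).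
Proof.
  intros Hw.
  rewrite (Hnu_phase w Hw).
  replace (sum_n_m (asym_term nu f g a b w) 1 N)
    with (scal (sum_n_m (fun k => (- / (w * s)) ^ k * boundary_term g nu f a b w k) 1 N)
               (bessel_phase s nu)).
  2:{ rewrite <- sum_n_m_scal_C. apply (sum_n_m_ext (G := C_AbelianMonoid)).
      intros k. symmetry. now apply asym_term_phase. }
  rewrite <- (remainder_telescope g c d s Hg Hs Hsg Hdg nu f a b Hca Hab Hbd Hf w N Hw).
  destruct (bessel_phase s nu) as [p1 p2]. rewrite !scal_C.
  unfold minus, plus, opp; simpl. unfold Cplus, Copp; simpl. f_equal; ring.
Qed.

End Expansion.

Theorem theorem2p1 (nu a b : R) (f g : R -> R) :
  a < b ->
  smooth_on f a b -> smooth_on g a b ->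
  (forall x, a <= x <= b -> g x <> 0) ->
  (forall x, a <= x <= b -> Derive g x <> 0) ->
  forall N : nat, exists M omega0 : R, 0 < omega0 /\
    forall omega : R, omega0 <= omega ->
      Cmod (minus (Hnu nu f g a b omega)
                  (opp (sum_n_m (asym_term nu f g a b omega) 1 N)))
      <= M * Rpower omega (- (INR N + 3 / 2)).
Proof.
  intros Hab Hf Hg Hg0 Hg1 N.
  destruct (exists_sign_neighbourhood f g a b Hab Hf Hg Hg0 Hg1)
    as (c & d & s & Hca & Hbd & HfC & HgC & Hs & Hsg & Hdg).
  destruct (remainder_bound g c d s HgC Hs Hsg Hdg nu f a b Hca Hab Hbd HfC N)
    as (M & w0 & Hw0 & HM).
  exists M, w0. split; [exact Hw0|]. intros w Hw.
  rewrite (expansion_error nu a b c d s f g Hca Hab Hbd HfC HgC Hs Hsg Hdg w N) by lra.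
  rewrite Cmod_scal, Cmod_bessel_phase, Rmult_1_r.
  exact (HM w Hw).
Qed.
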